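(* Let $d\ge 1$, let $L:\mathbb{R}^d\times\mathbb{R}^{d+1}\to\mathbb{R}$ be a loss function such that $L(w,z)$ is convex in $w$ for every $z$, and let $\nabla_1 L(w,z)$ denote a (fixed choice of) sub-gradient of $L(\cdot,z)$ at $w$. Assume there are constants $A,B\ge 0$ such that $\|\nabla_1 L(w,z)\|^2\le A\,L(w,z)+B$ for all $w\in\mathbb{R}^d$ and $z\in\mathbb{R}^{d+1}$. Let $\eta>0$ with $1-0.5A\eta\neq 0$, let $\theta\in[0,\infty]$, let $g_1,g_2,\ldots\ge 0$ be gravity parameters, and let $z_1,z_2,\ldots\in\mathbb{R}^{d+1}$ be an arbitrary sequence. Define $w_1=0$ and, for $i\ge 1$, \[ w_{i+1}=T_1\big(w_i-\eta\nabla_1 L(w_i,z_i),\ \eta g_i,\ \theta\big). \] Then for every $T\ge 1$ and every $\bar w\in\mathbb{R}^d$, \[ \frac{1-0.5A\eta}{T}\sum_{i=1}^T\left[L(w_i,z_i)+\frac{g_i}{1-0.5A\eta}\,\|w_{i+1}\cdot I(|w_{i+1}|\le\theta)\|_1\right] \le \frac{\eta}{2}B+\frac{\|\bar w\|^2}{2\eta T}+\frac1T\sum_{i=1}^T\Big[L(\bar w,z_i)+g_i\,\|\bar w\cdot I(|w_{i+1}|\le\theta)\|_1\Big]. \]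
   Context: $\|\cdot\|$ is the Euclidean norm and $\|\cdot\|_1$ the $1$-norm. For $v=(v_1,\dots,v_d)\in\mathbb{R}^d$, $\alpha\ge 0$ and $\theta\in[0,\infty]$, the truncation operator is $T_1(v,\alpha,\theta)=(T_1(v_1,\alpha,\theta),\dots,T_1(v_d,\alpha,\theta))$ with $T_1(v_j,\alpha,\theta)=\max(0,v_j-\alpha)$ if $v_j\in[0,\theta]$, $=\min(0,v_j+\alpha)$ if $v_j\in[-\theta,0]$, and $=v_j$ otherwise. For vectors $v,v'\in\mathbb{R}^d$, $\|v\cdot I(|v'|\le\theta)\|_1:=\sum_{j=1}^d |v_j|\,I(|v'_j|\le\theta)$, where $I(\cdot)$ is the indicator function. *)

(* R : realType, vectors in R^d as row vectors 'rV[R]_d,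
   theta in [0, +oo] as an extended real. *)
From HB Require Import structures.
From mathcomp Require Import all_boot all_order all_algebra.
From mathcomp Require Import reals constructive_ereal.
Set Implicit Arguments. Unset Strict Implicit. Unset Printing Implicit Defensive.
Import Order.TTheory GRing.Theory Num.Theory.
Local Open Scope ring_scope.

Section Defs.
Variable R : realType.

Definition sqnorm (n : nat) (v : 'rV[R]_n) : R := \sum_(j < n) (v 0 j) ^+ 2.

Definition dotp (n : nat) (u v : 'rV[R]_n) : R := \sum_(j < n) u 0 j * v 0 j.

Definition T1s (x alpha : R) (theta : \bar R) : R :=
  if ((0 <= x) && (x%:E <= theta)%E) then Num.max 0 (x - alpha)
  else if ((x <= 0) && ((- x)%:E <= theta)%E) then Num.min 0 (x + alpha)
  else x.

Definition T1 (n : nat) (v : 'rV[R]_n) (alpha : R) (theta : \bar R) : 'rV[R]_n :=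
  \row_(j < n) T1s (v 0 j) alpha theta.

Definition l1_ind (n : nat) (v v' : 'rV[R]_n) (theta : \bar R) : R :=
  \sum_(j < n) `|v 0 j| * (if (`|v' 0 j|%:E <= theta)%E then 1 else 0).

End Defs.

From HB Require Import structures.
From mathcomp Require Import all_boot all_order all_algebra.
From mathcomp Require Import reals constructive_ereal ring lra.
Set Implicit Arguments. Unset Strict Implicit. Unset Printing Implicit Defensive.
Import Order.TTheory GRing.Theory Num.Theory.
Local Open Scope ring_scope.

(* A truncated-gradient step is a gradient step followed by soft thresholding by
   [eta * g_i] of the coordinates landing in [[-theta, theta]].  Soft thresholding is
   the proximal map of [a |.|], so on those coordinates it brings the iterate closer
   to any comparator [u] by at least [2 a (|w'_j| - |u_j|)]; elsewhere it is the
   identity.  Together with the subgradient inequality and the bound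
   [|grad|^2 <= A L + B] this bounds [2 eta ((1 - A eta / 2) L(w_i) + g_i |w_{i+1}|_1)]
   by the decrease of [|w_i - wbar|^2] plus comparator terms, and summing over
   [i = 1 .. T] telescopes, with [w_1 = 0]. *)

Section SoftThreshold.
Variable R : realFieldType.
Implicit Types x u a : R.

Lemma soft_threshold_pos_sqrB_le x u a : 0 <= a -> 0 <= x ->
  (Num.max 0 (x - a) - u) ^+ 2 <= (x - u) ^+ 2 - 2 * a * (`|Num.max 0 (x - a)| - `|u|).
Proof.
move=> a0 x0; rewrite /Num.max; case: ltP => xa;
  rewrite ?normr0 ?(ger0_norm (ltW xa));
  (case: (lerP 0 u) => u0; [rewrite (ger0_norm u0) | rewrite (ltr0_norm u0)]);
  rewrite !expr2; nra.
Qed.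

Lemma soft_threshold_neg_sqrB_le x u a : 0 <= a -> x <= 0 ->
  (Num.min 0 (x + a) - u) ^+ 2 <= (x - u) ^+ 2 - 2 * a * (`|Num.min 0 (x + a)| - `|u|).
Proof.
move=> a0 x0; have -> : Num.min 0 (x + a) = - Num.max 0 (- x - a).
  by rewrite oppr_max oppr0 opprD !opprK.
have nx0 : 0 <= - x by rewrite oppr_ge0.
have := soft_threshold_pos_sqrB_le (- u) a0 nx0.
by rewrite !normrN !expr2; nra.
Qed.

End SoftThreshold.

Lemma T1s_sqrB_le (R : realType) (x u a : R) (theta : \bar R) : 0 <= a ->
  (T1s x a theta - u) ^+ 2 <= (x - u) ^+ 2 - 2 * a *
    ((`|T1s x a theta| - `|u|) * (if (`|T1s x a theta|%:E <= theta)%E then 1 else 0)).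
Proof.
move=> a0; rewrite /T1s; case: ifP => [/andP[x0 xth] | xNpos].
  have -> : (`|Num.max 0 (x - a)|%:E <= theta)%E.
    apply: le_trans xth; rewrite lee_fin ger0_norm ?le_max ?lexx //.
    by rewrite ge_max x0 lerBlDr lerDl a0.
  by rewrite mulr1; apply: soft_threshold_pos_sqrB_le.
case: ifP => [/andP[x0 xth] | xNneg].
  have -> : (`|Num.min 0 (x + a)|%:E <= theta)%E.
    apply: le_trans xth; rewrite lee_fin ler0_norm ?ge_min ?lexx //.
    by rewrite lerN2 le_min x0 lerDl a0.
  by rewrite mulr1; apply: soft_threshold_neg_sqrB_le.
suff -> : (`|x|%:E <= theta)%E = false by rewrite mulr0 mulr0 subr0.
apply/negbTE/negP => xth; case: (lerP 0 x) => x0.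
  by move: xNpos; rewrite x0 -(ger0_norm x0) xth.
by move: xNneg; rewrite (ltW x0) -(ltr0_norm x0) xth.
Qed.

Section RowVectors.
Variables (R : realType) (n : nat).
Implicit Types u v : 'rV[R]_n.

Lemma sqnorm_ge0 v : 0 <= sqnorm v.
Proof. by apply: sumr_ge0 => j _; apply: sqr_ge0. Qed.

Lemma sqnormN v : sqnorm (- v) = sqnorm v.
Proof. by apply: eq_bigr => j _; rewrite mxE sqrrN. Qed.

Lemma dotpNr u v : dotp u (- v) = - dotp u v.
Proof. by rewrite /dotp -sumrN; apply: eq_bigr => j _; rewrite mxE mulrN. Qed.

Lemma sqnormB_scale u v (e : R) :
  sqnorm (u - e *: v) = sqnorm u - 2 * e * dotp v u + e ^+ 2 * sqnorm v.
Proof.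
rewrite /sqnorm /dotp !mulr_sumr -sumrB -big_split; apply: eq_bigr => j _.
by rewrite !mxE /=; ring.
Qed.

Lemma T1_sqnormB_le v u (a : R) (theta : \bar R) : 0 <= a ->
  sqnorm (T1 v a theta - u) <= sqnorm (v - u)
    - 2 * a * (l1_ind (T1 v a theta) (T1 v a theta) theta - l1_ind u (T1 v a theta) theta).
Proof.
move=> a0; rewrite /sqnorm /l1_ind -sumrB mulr_sumr -sumrB.
by apply: ler_sum => j _; rewrite !mxE -mulrBl; apply: T1s_sqrB_le.
Qed.

End RowVectors.

Lemma sum_le_telescope (R : numDomainType) (a b D : nat -> R) (m k : nat) : (m <= k)%N ->
  (forall i, (m <= i < k)%N -> a i <= D i - D i.+1 + b i) ->
  \sum_(m <= i < k) a i <= D m - D k + \sum_(m <= i < k) b i.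
Proof.
move=> mk ab; apply: le_trans (ler_sum_nat ab) _.
have tele : \sum_(m <= i < k) (D i - D i.+1) = D m - D k.
  rewrite -opprB -telescope_sumr // -sumrN.
  by apply: eq_bigr => i _; rewrite opprB.
by rewrite big_split /= tele.
Qed.

Section TruncatedGradientStep.
Variables (R : realType) (n : nat) (Z : Type).
Variables (L : 'rV[R]_n -> Z -> R) (grad : 'rV[R]_n -> Z -> 'rV[R]_n) (A B : R).
Hypothesis grad_subgradient : forall zz u v, L u zz + dotp (grad u zz) (v - u) <= L v zz.
Hypothesis grad_sqnorm_le : forall u zz, sqnorm (grad u zz) <= A * L u zz + B.

Lemma truncated_gradient_step_le (w w' wbar : 'rV[R]_n) (zz : Z) (eta gi : R)
    (theta : \bar R) :
  0 <= eta -> 0 <= gi -> w' = T1 (w - eta *: grad w zz) (eta * gi) theta ->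
  2 * eta * ((1 - A * eta / 2) * L w zz + gi * l1_ind w' w' theta)
  <= sqnorm (w - wbar) - sqnorm (w' - wbar)
     + (2 * eta * (L wbar zz + gi * l1_ind wbar w' theta) + eta ^+ 2 * B).
Proof.
move=> eta0 gi0 w'E; set G := grad w zz.
have trunc := T1_sqnormB_le (w - eta *: G) wbar theta (mulr_ge0 eta0 gi0).
rewrite -w'E addrAC sqnormB_scale in trunc.
have sub : 2 * eta * (L w zz - L wbar zz) <= 2 * eta * dotp G (w - wbar).
  have := grad_subgradient zz w wbar; rewrite -opprB dotpNr => sub.
  by apply: ler_wpM2l; lra.
have bound : eta ^+ 2 * sqnorm G <= eta ^+ 2 * (A * L w zz + B).
  by apply: ler_wpM2l; [apply: sqr_ge0 | apply: grad_sqnorm_le].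
nra.
Qed.

End TruncatedGradientStep.

Theorem theorem1 (R : realType) (d : nat)
  (L : 'rV[R]_d -> 'rV[R]_(d.+1) -> R)
  (grad : 'rV[R]_d -> 'rV[R]_(d.+1) -> 'rV[R]_d)
  (A B eta : R) (theta : \bar R)
  (g : nat -> R) (z : nat -> 'rV[R]_(d.+1)) (w : nat -> 'rV[R]_d) :
  (0 < d)%N ->
  (* L(., z) is convex for every z *)
  (forall (zz : 'rV[R]_(d.+1)) (u v : 'rV[R]_d) (t : R), 0 <= t <= 1 ->
      L (t *: u + (1 - t) *: v) zz <= t * L u zz + (1 - t) * L v zz) ->
  (* grad w z is a sub-gradient of L(., z) at w *)
  (forall (zz : 'rV[R]_(d.+1)) (u v : 'rV[R]_d),
      L u zz + dotp (grad u zz) (v - u) <= L v zz) ->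
  0 <= A -> 0 <= B ->
  (forall (u : 'rV[R]_d) (zz : 'rV[R]_(d.+1)),
      sqnorm (grad u zz) <= A * L u zz + B) ->
  0 < eta -> 1 - A * eta / 2 != 0 ->
  (0 <= theta)%E ->
  (forall i, (1 <= i)%N -> 0 <= g i) ->
  w 1%N = 0 ->
  (forall i, (1 <= i)%N ->
     w i.+1 = T1 (w i - eta *: grad (w i) (z i)) (eta * g i) theta) ->
  forall (T : nat) (wbar : 'rV[R]_d), (1 <= T)%N ->
  (1 - A * eta / 2) / T%:R *
    \sum_(1 <= i < T.+1)
       (L (w i) (z i) + g i / (1 - A * eta / 2) * l1_ind (w i.+1) (w i.+1) theta)
  <= eta / 2 * B + sqnorm wbar / (2 * eta * T%:R)
     + 1 / T%:R * \sum_(1 <= i < T.+1)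
         (L wbar (z i) + g i * l1_ind wbar (w i.+1) theta).
Proof.
move=> _ _ subgrad _ _ grad_le eta0 c0 _ g0 w1 wE T wbar T_gt0.
set c := 1 - A * eta / 2.
have := @sum_le_telescope _ _ _ (fun i => sqnorm (w i - wbar)) _ _ (leqW T_gt0)
  (fun i iT => truncated_gradient_step_le subgrad grad_le wbar (ltW eta0)
                 (g0 i (andP iT).1) (wE i (andP iT).1)).
rewrite w1 sub0r sqnormN big_split /= sumr_const_nat subn1 /= => regret.
have DT0 := sqnorm_ge0 (w T.+1 - wbar).
have T0 : 0 < T%:R :> R by rewrite ltr0n.
have -> : c / T%:R * \sum_(1 <= i < T.+1)
       (L (w i) (z i) + g i / c * l1_ind (w i.+1) (w i.+1) theta)
   = (2 * eta * T%:R)^-1 * \sum_(1 <= i < T.+1)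
       (2 * eta * (c * L (w i) (z i) + g i * l1_ind (w i.+1) (w i.+1) theta)).
  rewrite !mulr_sumr; apply: eq_bigr => i _; field.
  by rewrite c0 (gt_eqF eta0) (gt_eqF T0).
have -> : eta / 2 * B + sqnorm wbar / (2 * eta * T%:R)
     + 1 / T%:R * \sum_(1 <= i < T.+1) (L wbar (z i) + g i * l1_ind wbar (w i.+1) theta)
   = (2 * eta * T%:R)^-1 * (sqnorm wbar + (\sum_(1 <= i < T.+1)
       2 * eta * (L wbar (z i) + g i * l1_ind wbar (w i.+1) theta) + eta ^+ 2 * B *+ T)).
  rewrite -mulr_sumr mulr_natr; field.
  by rewrite (gt_eqF eta0) (gt_eqF T0).
by apply: ler_wpM2l; [rewrite invr_ge0 mulr_ge0 // ?ler0n; lra | lra].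
Qed.
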